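(* Let $k, \mu, n$ be positive integers and $s$ a nonnegative integer such that $k^4\mu^4 n^4 - 16k(4\mu^2+n^2) = s^2$. Let $\beta$ be a positive integer. If $k^2\mu^2 n^2 - s = 2\beta$, then \[ \beta^3 + 64 = (\beta k\mu^2 - 4)(\beta k n^2 - 16) \] and $k$ divides $\beta^2$. If $k^2\mu^2 n^2 - s \geq 2\beta$, then $\beta^3 + 64 \geq (\beta k \mu^2 - 4)(\beta k n^2 - 16)$. *)

From Stdlib Require Import ZArith.

From Stdlib Require Import ZArith Lia.
Open Scope Z_scope.

(* Put A := k^2 mu^2 n^2 and C := 4k(4 mu^2 + n^2), so the hypothesis reads A^2 - 4C = s^2.
   Expanding, beta^3 + 64 - (beta k mu^2 - 4)(beta k n^2 - 16) = beta (C - beta (A - beta)),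
   and 4 (C - beta (A - beta)) = (A - 2 beta)^2 - s^2 = (A - s - 2 beta)(A + s - 2 beta).
   Both factors are nonnegative when A - s >= 2 beta, and the first vanishes when
   A - s = 2 beta; in that case beta^2 = beta A - C is a multiple of k. *)

Lemma discriminant_gap_factor (A C s b : Z) :
  A^2 - 4 * C = s^2 -> 4 * (C - b * (A - b)) = (A - s - 2 * b) * (A + s - 2 * b).
Proof. intro hdisc; ring_simplify; lia. Qed.

Lemma mul_sub_le_of_discriminant (A C s b : Z) :
  A^2 - 4 * C = s^2 -> 0 <= s -> 2 * b <= A - s -> b * (A - b) <= C.
Proof.
  intros hdisc hs hb.
  pose proof (discriminant_gap_factor A C s b hdisc) as hfactor.
  assert (hprod : 0 <= (A - s - 2 * b) * (A + s - 2 * b)) by (apply Z.mul_nonneg_nonneg; lia).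
  lia.
Qed.

Lemma mul_sub_eq_of_discriminant (A C s b : Z) :
  A^2 - 4 * C = s^2 -> A - s = 2 * b -> b * (A - b) = C.
Proof.
  intros hdisc hb.
  pose proof (discriminant_gap_factor A C s b hdisc) as hfactor.
  replace (A - s - 2 * b) with 0 in hfactor by lia.
  lia.
Qed.

Lemma cube_add_64_sub_product (k mu n b : Z) :
  b^3 + 64 - (b * k * mu^2 - 4) * (b * k * n^2 - 16)
  = b * (4 * k * (4 * mu^2 + n^2) - b * (k^2 * mu^2 * n^2 - b)).
Proof. ring. Qed.

Theorem lemma6 (k mu n s beta : Z)
  (hk : 0 < k) (hmu : 0 < mu) (hn : 0 < n) (hs : 0 <= s) (hbeta : 0 < beta)
  (hE : k^4 * mu^4 * n^4 - 16 * k * (4 * mu^2 + n^2) = s^2) :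
  (k^2 * mu^2 * n^2 - s = 2 * beta ->
     beta^3 + 64 = (beta * k * mu^2 - 4) * (beta * k * n^2 - 16)
     /\ (k | beta^2)) /\
  (k^2 * mu^2 * n^2 - s >= 2 * beta ->
     beta^3 + 64 >= (beta * k * mu^2 - 4) * (beta * k * n^2 - 16)).
Proof.
  assert (hdisc : (k^2 * mu^2 * n^2)^2 - 4 * (4 * k * (4 * mu^2 + n^2)) = s^2)
    by (rewrite <- hE; ring).
  pose proof (cube_add_64_sub_product k mu n beta) as hexpand.
  split; intro hroot.
  - pose proof (mul_sub_eq_of_discriminant _ _ _ beta hdisc hroot) as hquad.
    split.
    + rewrite <- hquad, Z.sub_diag, Z.mul_0_r in hexpand; lia.
    + exists (beta * k * mu^2 * n^2 - 4 * (4 * mu^2 + n^2)).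
      replace (beta^2) with (beta * (k^2 * mu^2 * n^2) - 4 * k * (4 * mu^2 + n^2))
        by (rewrite <- hquad; ring).
      ring.
  - assert (hquad := mul_sub_le_of_discriminant _ _ _ beta hdisc hs ltac:(lia)).
    assert (hnonneg := Z.mul_nonneg_nonneg beta _ ltac:(lia) (proj2 (Z.le_0_sub _ _) hquad)).
    lia.
Qed.
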